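(* Let $G=(V,E,w)$ be a revenue instance on $|V|=n$ data points with weights $w_{ij}\in[0,1]$, and let $T^O$ be a binary HC tree maximizing $rev_G$. Then for any $\epsilon>0$ there exists an HC tree $\tilde T$ on $V$ such that (i) $\tilde T$ contains $\Theta(1/\epsilon)$ internal nodes, each with at most $3\epsilon n$ children, and (ii) $rev_G(\tilde T)\ge (1-19\epsilon)\,rev_G(T^O)$.
   Context: An HC tree on a set $V$ of $n$ data points is a rooted tree whose leaves are in bijective correspondence with $V$. For data points $i,j$, $T_{ij}$ denotes the subtree rooted at the lowest common ancestor of $i$ and $j$ in $T$, and $|T_{ij}|$ is its number of leaves. For a weighted graph $G=(V,E,w)$ with similarity weights $w_{ij}\in[0,1]$ (absent edges have weight $0$), the revenue of an HC tree $T$ is $rev_G(T)=\sum_{i<j} w_{ij}(n-|T_{ij}|)$; this same formula is used for non-binary trees. *)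

From HB Require Import structures.
From mathcomp Require Import all_boot all_order all_algebra.
Set Implicit Arguments. Unset Strict Implicit. Unset Printing Implicit Defensive.
Import Order.TTheory GRing.Theory Num.Theory.

Inductive tree (T : Type) : Type :=
| Leaf of T
| Node of seq (tree T).
Arguments Leaf {T}.
Arguments Node {T}.

Section Trees.
Variable n : nat.
Notation V := 'I_n.

Fixpoint leaves (t : tree V) : seq V :=
  match t with
  | Leaf x => [:: x]
  | Node ts =>
      (fix go (ts : seq (tree V)) : seq V :=
         match ts with [::] => [::] | c :: cs => leaves c ++ go cs end) ts
  end.

Fixpoint all_nodes (P : seq (tree V) -> bool) (t : tree V) : bool :=
  match t with
  | Leaf _ => true
  | Node ts =>
      P ts &&
      (fix go (ts : seq (tree V)) : bool :=
         match ts with [::] => true | c :: cs => all_nodes P c && go cs end) ts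
  end.

Fixpoint num_internal (t : tree V) : nat :=
  match t with
  | Leaf _ => 0
  | Node ts =>
      ((fix go (ts : seq (tree V)) : nat :=
         match ts with [::] => 0 | c :: cs => num_internal c + go cs end) ts).+1
  end.

Definition is_hc_tree (t : tree V) : bool :=
  perm_eq (leaves t) (enum 'I_n) && all_nodes (fun ts => size ts != 0) t.

Definition is_binary (t : tree V) : bool :=
  all_nodes (fun ts => size ts == 2) t.

(* |T_ij|: number of leaves of the subtree rooted at the lowest common
   ancestor of i and j (descend into the child containing both, if any). *)
Fixpoint lca_size (i j : V) (t : tree V) : nat :=
  match t with
  | Leaf _ => 1
  | Node ts =>
      odflt (size (leaves t))
        ((fix go (ts : seq (tree V)) : option nat :=
            match ts with
            | [::] => None
            | c :: cs =>
                if (i \in leaves c) && (j \in leaves c)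
                then Some (lca_size i j c) else go cs
            end) ts)
  end.

Definition hc_rev (R : pzRingType) (w : V -> V -> R) (t : tree V) : R :=
  \sum_(i < n) \sum_(j < n | (i < j)%N) w i j * (n - lca_size i j t)%:R.

End Trees.

(* Let K be the integer part of eps n.  Call a subtree of the optimal binary
   tree T^O light if it has at most K leaves.  Contract T^O top-down: keep every
   node whose two children are heavy, and along each heavy path glue the light
   subtrees hanging off it into flat nodes, flushed as soon as they hold K
   leaves.  Every node of the result has at most 2K <= 3 eps n children, there
   are Theta(n / K) = Theta(1 / eps) internal nodes, and every subtree of T^O
   sits inside a subtree of the contraction with at most 2K more leaves.  Hence
   every |T_ij| grows by at most 2K and the revenue drops by at most 2K W, where
   W is the total weight.
   On the other hand, cut V into four quarters of at least q = n / 4 points each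
   and pair them up in the three possible ways: every pair i, j lies on a common
   side of one of the three resulting bipartitions, whose other side then has at
   least 2q points.  Comparing T^O with these three trees gives
   3 rev(T^O) >= 2q W, and 2K W <= 19 eps rev(T^O) once n >= 20 (for smaller n,
   19 eps >= 1 and the claim is trivial). *)

From HB Require Import structures.
From mathcomp Require Import all_boot all_order all_algebra.
From mathcomp Require Import zify ring lra.
Import Order.TTheory GRing.Theory Num.Theory.
Set Implicit Arguments. Unset Strict Implicit. Unset Printing Implicit Defensive.

Section Trees.
Variable n : nat.
Notation V := 'I_n.
Implicit Types (t s u l r : tree V) (ts : seq (tree V)) (i j x : V).

Section NestedInduction.
Variable P : tree V -> Prop.
Hypothesis P_leaf : forall x, P (Leaf x).
Hypothesis P_node : forall ts, (forall c, List.In c ts -> P c) -> P (Node ts).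

Fixpoint tree_nested_ind t : P t :=
  match t with
  | Leaf x => P_leaf x
  | Node ts => P_node
      ((fix children ts : forall c, List.In c ts -> P c :=
         match ts return forall c, List.In c ts -> P c with
         | [::] => fun c (F : False) => False_ind _ F
         | c0 :: cs => fun c in_c =>
             match in_c with
             | or_introl E => eq_ind c0 P (tree_nested_ind c0) c E
             | or_intror in_cs => children cs c in_cs
             end
         end) ts)
  end.
End NestedInduction.

Lemma leaves_node ts : leaves (Node ts) = flatten (map (@leaves n) ts).
Proof. by elim: ts => //= c cs ->. Qed.

Lemma size_leaves_node ts : size (leaves (Node ts)) = \sum_(c <- ts) size (leaves c).
Proof. by rewrite leaves_node size_flatten /shape -map_comp sumnE big_map. Qed.

Lemma all_nodes_node P ts : all_nodes P (Node ts) = P ts && all (all_nodes P) ts.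
Proof. by rewrite /=; congr (_ && _); elim: ts => //= c cs ->. Qed.

Lemma num_internal_node ts :
  num_internal (Node ts) = (\sum_(c <- ts) num_internal c).+1.
Proof. by rewrite /=; congr S; elim: ts => [|c cs ->]; rewrite ?big_nil ?big_cons. Qed.

(* The local fixpoint in the definition of [lca_size], so that
   [lca_size_node] holds by conversion. *)
Definition lca_child i j :=
  fix go ts : option nat :=
    match ts with
    | [::] => None
    | c :: cs =>
        if (i \in leaves c) && (j \in leaves c) then Some (lca_size i j c) else go cs
    end.

Lemma lca_size_node i j ts :
  lca_size i j (Node ts) = odflt (size (leaves (Node ts))) (lca_child i j ts).
Proof. by []. Qed.

Lemma sub_all_nodes (P Q : pred (seq (tree V))) t :
  subpred P Q -> all_nodes P t -> all_nodes Q t.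
Proof.
move=> PQ; elim/tree_nested_ind: t => [//|ts IH].
rewrite !all_nodes_node => /andP[/PQ -> all_ts] /=.
elim: ts IH all_ts => //= c cs IHcs IH /andP[c_P cs_P].
rewrite (IH c (or_introl erefl) c_P) /=.
by apply: IHcs cs_P => c' in_cs; apply: IH c' (or_intror in_cs).
Qed.

Lemma size_leaves_le_num_internal m t :
  all_nodes (fun ts => size ts <= m)%N t ->
  (size (leaves t) <= maxn 1 (m * num_internal t))%N.
Proof.
elim/tree_nested_ind: t => [x _|ts IH]; first by rewrite /= muln0.
rewrite all_nodes_node size_leaves_node num_internal_node => /andP[ts_m all_ts].
suff: (\sum_(c <- ts) size (leaves c) <= size ts + m * \sum_(c <- ts) num_internal c)%N.
  by move: ts_m; rewrite mulnS; lia.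
elim: ts IH all_ts {ts_m} => [|c cs IHcs] IH /=; first by rewrite !big_nil.
case/andP=> c_m cs_m; rewrite !big_cons mulnDr.
have := IH c (or_introl erefl) c_m.
have := IHcs (fun c' in_cs => IH c' (or_intror in_cs)) cs_m.
lia.
Qed.

Definition flat (xs : seq V) : tree V := Node (map Leaf xs).

Lemma leaves_flat xs : leaves (flat xs) = xs.
Proof. by rewrite /flat leaves_node; elim: xs => //= x xs ->. Qed.

Lemma num_internal_flat xs : num_internal (flat xs) = 1%N.
Proof. by rewrite /flat num_internal_node big_map big1. Qed.

Lemma all_nodes_flat P xs : all_nodes P (flat xs) = P (map Leaf xs).
Proof. by rewrite /flat all_nodes_node (_ : all _ _ = true) ?andbT //; elim: xs. Qed.

Inductive subtree s : tree V -> Prop :=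
| subtree_refl : subtree s s
| subtree_node ts c : List.In c ts -> subtree s c -> subtree s (Node ts).

Lemma subtree_trans s t u : subtree s t -> subtree t u -> subtree s u.
Proof. by move=> st; elim=> // ts c c_in _; apply: subtree_node. Qed.

Lemma subtree_child ts c : List.In c ts -> subtree c (Node ts).
Proof. by move=> c_in; apply: subtree_node c_in (subtree_refl _). Qed.

Lemma subtree_node2 s l r :
  subtree s (Node [:: l; r]) -> [\/ s = Node [:: l; r], subtree s l | subtree s r].
Proof.
move=> st; inversion st as [|ts c c_in sc]; first by constructor 1.
by case: c_in sc => [<-|[<-|//]]; [constructor 2 | constructor 3].
Qed.

Lemma mem_leaves_child ts c : List.In c ts -> {subset leaves c <= leaves (Node ts)}.
Proof.
rewrite leaves_node; elim: ts => //= d ds IH [<- x xc|/IH sub x xc];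
  by rewrite mem_cat ?xc ?sub ?orbT.
Qed.

Lemma mem_leaves_subtree s t : subtree s t -> {subset leaves s <= leaves t}.
Proof. by elim=> // ts c c_in _ sub x /sub; apply: mem_leaves_child. Qed.

Lemma size_leaves_child ts c :
  List.In c ts -> (size (leaves c) <= size (leaves (Node ts)))%N.
Proof.
rewrite size_leaves_node; elim: ts => //= d ds IH [<-|/IH c_le];
  by rewrite big_cons ?leq_addr // (leq_trans c_le) ?leq_addl.
Qed.

Lemma size_leaves_subtree s t : subtree s t -> (size (leaves s) <= size (leaves t))%N.
Proof. by elim=> // ts c c_in _ s_le; rewrite (leq_trans s_le) ?size_leaves_child. Qed.

Lemma uniq_leaves_child ts c : uniq (leaves (Node ts)) -> List.In c ts -> uniq (leaves c).
Proof.
rewrite leaves_node; elim: ts => //= d ds IH; rewrite cat_uniq => /and3P[ud _ uds].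
by case=> [<-|]; last exact: IH.
Qed.

Lemma lca_child_some i j ts k : lca_child i j ts = Some k ->
  exists2 c, List.In c ts & [/\ i \in leaves c, j \in leaves c & k = lca_size i j c].
Proof.
elim: ts => //= c cs IH; case: ifP => [/andP[ic jc] [<-]|_ /IH[d d_in d_lca]].
  by exists c; first by left.
by exists d; first by right.
Qed.

Lemma lca_child_first i j ts c : uniq (leaves (Node ts)) -> List.In c ts ->
  i \in leaves c -> j \in leaves c -> lca_child i j ts = Some (lca_size i j c).
Proof.
rewrite leaves_node; elim: ts => //= d ds IH; rewrite cat_uniq => /and3P[_ disj uds].
case=> [<- -> -> //|c_in ic jc]; rewrite IH //.
case: ifP => // /andP[id _]; case/hasP: disj; exists i => //.
by move: (mem_leaves_child c_in ic); rewrite leaves_node.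
Qed.

Lemma lca_size_witness i j t : i \in leaves t -> j \in leaves t ->
  exists2 s, subtree s t &
    [/\ i \in leaves s, j \in leaves s & lca_size i j t = size (leaves s)].
Proof.
elim/tree_nested_ind: t => [x|ts IH] it jt.
  by exists (Leaf x); first exact: subtree_refl.
rewrite lca_size_node; case E: lca_child => [k|] /=.
  have [c c_in [ic jc ->]] := lca_child_some E.
  have [s sc s_lca] := IH c c_in ic jc.
  by exists s; first exact: subtree_node c_in sc.
by exists (Node ts); first exact: subtree_refl.
Qed.

Lemma lca_size_le_subtree i j s t : uniq (leaves t) -> subtree s t ->
  i \in leaves s -> j \in leaves s -> (lca_size i j t <= size (leaves s))%N.
Proof.
move=> + st si sj; elim: st => [|ts c c_in sc IH] t_uniq.
  by have [s' s's [_ _ ->]] := lca_size_witness si sj; apply: size_leaves_subtree.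
rewrite lca_size_node (lca_child_first t_uniq c_in) /=.
- exact: IH (uniq_leaves_child t_uniq c_in).
- exact: mem_leaves_subtree sc _ si.
- exact: mem_leaves_subtree sc _ sj.
Qed.

Definition near t i j b :=
  exists2 s, subtree s t & [/\ i \in leaves s, j \in leaves s & (size (leaves s) <= b)%N].

Lemma near_subtree s t i j b : subtree s t -> near s i j b -> near t i j b.
Proof. by move=> st [u us u_near]; exists u => //; apply: subtree_trans us st. Qed.

Lemma near_leaves t i j b :
  i \in leaves t -> j \in leaves t -> (size (leaves t) <= b)%N -> near t i j b.
Proof. by move=> it jt t_le; exists t; first exact: subtree_refl. Qed.

Lemma near_le t i j b b' : (b <= b')%N -> near t i j b -> near t i j b'.
Proof. by move=> le_b [s st [si sj s_le]]; exists s; last split; rewrite ?(leq_trans s_le). Qed.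

Lemma lca_size_le_near t i j b : uniq (leaves t) -> near t i j b -> (lca_size i j t <= b)%N.
Proof.
by move=> t_uniq [s st [si sj]]; apply: leq_trans (lca_size_le_subtree t_uniq st si sj).
Qed.

End Trees.

Section Binary.
Variable n : nat.
Notation V := 'I_n.
Implicit Types (t l r : tree V) (ts : seq (tree V)).

Section BinaryInduction.
Variable P : tree V -> Prop.
Hypothesis P_leaf : forall x, P (Leaf x).
Hypothesis P_node2 : forall l r, P l -> P r -> P (Node [:: l; r]).
Hypothesis P_other : forall ts, size ts != 2 -> P (Node ts).

Fixpoint binary_ind t : P t :=
  match t with
  | Leaf x => P_leaf x
  | Node [:: l; r] => P_node2 (binary_ind l) (binary_ind r)
  | Node ts => @P_other ts isT
  end.
End BinaryInduction.

Lemma leaves_node2 l r : leaves (Node [:: l; r]) = leaves l ++ leaves r.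
Proof. by rewrite /= cats0. Qed.

Lemma num_internal_node2 l r :
  num_internal (Node [:: l; r]) = (num_internal l + num_internal r).+1.
Proof. by rewrite /= addn0. Qed.

Lemma all_nodes_node2 P l r :
  all_nodes P (Node [:: l; r]) = [&& P [:: l; r], all_nodes P l & all_nodes P r].
Proof. by rewrite all_nodes_node /= andbT. Qed.

Lemma is_binary_node2 l r : is_binary (Node [:: l; r]) = is_binary l && is_binary r.
Proof. by rewrite /is_binary all_nodes_node2. Qed.

Lemma is_binary_other ts : size ts != 2 -> is_binary (Node ts) = false.
Proof. by rewrite /is_binary all_nodes_node => /negbTE ->. Qed.

Lemma size_leaves_binary_gt0 t : is_binary t -> (0 < size (leaves t))%N.
Proof.
elim/binary_ind: t => [//|l r IHl _|ts /is_binary_other -> //].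
by rewrite is_binary_node2 leaves_node2 size_cat addn_gt0 => /andP[/IHl -> _].
Qed.

End Binary.

(** * Coarsening a binary tree *)

Section Coarsening.
Variables (n K : nat).
Notation V := 'I_n.
Implicit Types (t s u a b l r : tree V) (ts : seq (tree V)) (i j x : V) (acc : seq V).
Notation light t := (size (leaves t) <= K)%N.

Definition graft acc u := if acc is [::] then u else Node [:: flat acc; u].

Definition absorb acc a (cont : seq V -> tree V) : tree V :=
  let acc' := acc ++ leaves a in
  if (size acc' < K)%N then cont acc' else graft acc' (cont [::]).

(* [coarsen t acc] contracts [t] while carrying in [acc] (of size < K) the
   leaves of the light subtrees met so far on the current heavy path. *)
Fixpoint coarsen t acc {struct t} : tree V :=
  if light t then flat (acc ++ leaves t) else
  match t with
  | Node [:: l; r] =>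
      if light l then absorb acc l (coarsen r)
      else if light r then absorb acc r (coarsen l)
      else graft acc (Node [:: coarsen l [::]; coarsen r [::]])
  | _ => flat (acc ++ leaves t)
  end.

Lemma coarsen_leaf x acc : coarsen (Leaf x) acc = flat (acc ++ [:: x]).
Proof. by rewrite /=; case: ifP. Qed.

Lemma coarsen_light t acc : light t -> coarsen t acc = flat (acc ++ leaves t).
Proof. by case: t => [x|ts] /= ->. Qed.

Lemma coarsen_other ts acc :
  size ts != 2 -> coarsen (Node ts) acc = flat (acc ++ leaves (Node ts)).
Proof. by case: ts => [|? [|? [|? ?]]] //= _; case: ifP. Qed.

Lemma coarsen_node2 l r acc : ~~ light (Node [:: l; r]) ->
  coarsen (Node [:: l; r]) acc =
    if light l then absorb acc l (coarsen r)
    else if light r then absorb acc r (coarsen l)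
    else graft acc (Node [:: coarsen l [::]; coarsen r [::]]).
Proof. by move=> /negbTE heavy; rewrite [LHS]/= heavy. Qed.

Lemma leaves_graft acc u : leaves (graft acc u) = acc ++ leaves u.
Proof. by case: acc => // x acc; rewrite leaves_node2 leaves_flat. Qed.

Lemma num_internal_graft acc u :
  num_internal (graft acc u) = (num_internal u + (if acc is [::] then 0 else 2))%N.
Proof.
case: acc => [|x acc]; first by rewrite addn0.
by rewrite [graft _ _]/= num_internal_node2 num_internal_flat addn2 add1n.
Qed.

Lemma perm_leaves_absorb acc a b :
  (forall acc, perm_eq (leaves (coarsen b acc)) (acc ++ leaves b)) ->
  perm_eq (leaves (absorb acc a (coarsen b))) (acc ++ leaves a ++ leaves b).
Proof.
move=> perm_b; rewrite /absorb catA; case: ifP => _; first exact: perm_b.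
by rewrite leaves_graft perm_cat2l perm_b.
Qed.

Lemma perm_leaves_coarsen t acc : perm_eq (leaves (coarsen t acc)) (acc ++ leaves t).
Proof.
elim/binary_ind: t acc => [x|l r IHl IHr|ts ts_n2] acc.
- by rewrite coarsen_leaf leaves_flat.
- have [t_light|t_heavy] := boolP (light (Node [:: l; r])).
    by rewrite coarsen_light // leaves_flat.
  rewrite coarsen_node2 // leaves_node2.
  case: ifP => _; first exact: perm_leaves_absorb.
  case: ifP => _.
    by apply: perm_trans (perm_leaves_absorb _ _ IHl) _; rewrite perm_cat2l perm_catC.
  by rewrite leaves_graft leaves_node2 perm_cat2l (perm_cat (IHl [::]) (IHr [::])).
- by rewrite coarsen_other // leaves_flat.
Qed.

Lemma num_internal_absorb acc a b :
  (forall acc, (1 < num_internal (coarsen b acc))%N ->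
     (K * (num_internal (coarsen b acc) + 3) <= 6 * (size acc + size (leaves b)))%N) ->
  (1 < num_internal (absorb acc a (coarsen b)))%N ->
  (K * (num_internal (absorb acc a (coarsen b)) + 3) <=
     6 * (size acc + (size (leaves a) + size (leaves b))))%N.
Proof.
move=> IH; rewrite /absorb addnA -size_cat.
case: (ltnP (size (acc ++ leaves a)) K) => [_|acc'_ge]; first exact: IH.
rewrite num_internal_graft.
case: (acc ++ leaves a) acc'_ge => [|x xs] acc'_ge; first by rewrite addn0 => /IH.
move: acc'_ge => /= acc'_ge _.
by have [/IH|] := ltnP 1 (num_internal (coarsen b [::])); rewrite ?add0n; nia.
Qed.

Lemma num_internal_coarsen t acc : (1 < num_internal (coarsen t acc))%N ->
  (K * (num_internal (coarsen t acc) + 3) <= 6 * (size acc + size (leaves t)))%N.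
Proof.
elim/binary_ind: t acc => [x|l r IHl IHr|ts ts_n2] acc.
- by rewrite coarsen_leaf num_internal_flat.
- have [t_light|t_heavy] := boolP (light (Node [:: l; r])).
    by rewrite coarsen_light // num_internal_flat.
  rewrite coarsen_node2 // leaves_node2 size_cat.
  case: (leqP (size (leaves l)) K) => [_|l_heavy]; first exact: num_internal_absorb.
  case: (leqP (size (leaves r)) K) => [_|r_heavy].
    by rewrite (addnC (size (leaves l))); apply: num_internal_absorb.
  have heavy_bound u : (K < size (leaves u))%N ->
      (forall acc, (1 < num_internal (coarsen u acc))%N ->
         (K * (num_internal (coarsen u acc) + 3) <= 6 * (size acc + size (leaves u)))%N) ->
      (K * (num_internal (coarsen u [::]) + 3) <= 6 * size (leaves u))%N.
    by move=> u_heavy IHu; have [/IHu //|] := ltnP 1 (num_internal (coarsen u [::])); nia.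
  move: (heavy_bound _ l_heavy IHl) (heavy_bound _ r_heavy IHr).
  rewrite num_internal_graft num_internal_node2.
  by case: acc => [|y acc] /=; nia.
- by rewrite coarsen_other // num_internal_flat.
Qed.

Lemma num_internal_coarsen_le t : (K <= size (leaves t))%N ->
  (K * num_internal (coarsen t [::]) <= 6 * size (leaves t))%N.
Proof.
move=> K_le.
by have [/num_internal_coarsen|] := ltnP 1 (num_internal (coarsen t [::])); rewrite ?add0n; nia.
Qed.

Hypothesis K_gt0 : (0 < K)%N.

Definition small_node ts := (0 < size ts <= K.*2)%N.

Lemma small_node_flat xs : (0 < size xs <= K.*2)%N -> all_nodes small_node (flat xs).
Proof. by rewrite all_nodes_flat /small_node size_map. Qed.

Lemma small_node_graft acc u : (size acc <= K.*2)%N ->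
  all_nodes small_node u -> all_nodes small_node (graft acc u).
Proof.
case: acc => [//|x acc] acc_le u_small.
rewrite [graft _ _]/= all_nodes_node2 u_small small_node_flat ?andbT //.
by rewrite /small_node /=; lia.
Qed.

Lemma small_node_absorb acc a b : (size (leaves a) <= K)%N -> (size acc < K)%N ->
  (forall acc, (size acc < K)%N -> all_nodes small_node (coarsen b acc)) ->
  all_nodes small_node (absorb acc a (coarsen b)).
Proof.
move=> a_light acc_lt IH; rewrite /absorb.
case: ltnP => [/IH //|_]; apply: small_node_graft; last exact: IH.
by rewrite size_cat; lia.
Qed.

Lemma small_node_coarsen t acc :
  is_binary t -> (size acc < K)%N -> all_nodes small_node (coarsen t acc).
Proof.
elim/binary_ind: t acc => [x|l r IHl IHr|ts /is_binary_other -> //] acc.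
  by move=> _ acc_lt; rewrite coarsen_leaf small_node_flat // size_cat /=; lia.
move=> t_bin acc_lt; have := t_bin; rewrite is_binary_node2 => /andP[l_bin r_bin].
have [t_light|t_heavy] := boolP (light (Node [:: l; r])).
  have t_pos := size_leaves_binary_gt0 t_bin.
  by rewrite coarsen_light // small_node_flat // size_cat; lia.
rewrite coarsen_node2 //.
case: ifP => l_light; first exact: small_node_absorb (IHr^~ r_bin).
case: ifP => r_light; first exact: small_node_absorb (IHl^~ l_bin).
apply: small_node_graft; first lia.
by rewrite all_nodes_node2 IHl ?IHr // /small_node /=; lia.
Qed.

Lemma coarsen_hc t : is_hc_tree t -> is_binary t -> is_hc_tree (coarsen t [::]).
Proof.
move=> /andP[t_perm _] t_bin; apply/andP; split.
  exact: perm_trans (perm_leaves_coarsen t [::]) t_perm.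
apply: (sub_all_nodes _ (small_node_coarsen (acc := [::]) t_bin K_gt0)).
by move=> ts /andP[]; rewrite lt0n.
Qed.

Definition close_pairs u acc t :=
  (forall i j, i \in acc -> j \in acc -> near u i j K.*2) /\
  (forall s i j, subtree s t -> i \in leaves s -> j \in leaves s ->
     near u i j (size (leaves s) + K.*2)).

Lemma close_pairs_flat acc t : (size acc + size (leaves t) <= K.*2)%N ->
  close_pairs (flat (acc ++ leaves t)) acc t.
Proof.
move=> small; have near_flat i j : i \in acc ++ leaves t -> j \in acc ++ leaves t ->
    near (flat (acc ++ leaves t)) i j K.*2.
  by move=> ? ?; apply: near_leaves; rewrite ?leaves_flat ?size_cat.
split=> [i j ia ja|s i j st si sj]; first by apply: near_flat; rewrite mem_cat ?ia ?ja.
apply: near_le (leq_addl _ _) _.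
by apply: near_flat; rewrite mem_cat (mem_leaves_subtree st) ?orbT.
Qed.

Lemma near_graft_acc acc u i j m :
  i \in acc -> j \in acc -> (size acc <= m)%N -> near (graft acc u) i j m.
Proof.
case: acc => // x acc ia ja acc_le; rewrite [graft _ _]/=.
apply: (near_subtree (s := flat (x :: acc))); first by apply: subtree_child; left.
by apply: near_leaves; rewrite ?leaves_flat.
Qed.

Lemma near_graft acc u i j m : near u i j m -> near (graft acc u) i j m.
Proof.
case: acc => // x acc; rewrite [graft _ _]/=.
by apply: near_subtree; apply: subtree_child; right; left.
Qed.

Lemma close_pairs_absorb acc a b : (size (leaves a) <= K)%N -> (size acc < K)%N ->
  (forall acc, (size acc < K)%N -> close_pairs (coarsen b acc) acc b) ->
  let T := absorb acc a (coarsen b) in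
  (forall i j, i \in acc -> j \in acc -> near T i j K.*2) /\
  (forall s i j, subtree s a \/ subtree s b -> i \in leaves s -> j \in leaves s ->
     near T i j (size (leaves s) + K.*2)).
Proof.
move=> a_light acc_lt IH T.
suff [near_acc' near_b] : close_pairs T (acc ++ leaves a) b.
  split=> [i j ia ja|s i j [sa|sb] si sj]; last exact: near_b.
    by apply: near_acc'; rewrite mem_cat ?ia ?ja.
  apply: near_le (leq_addl _ _) (near_acc' _ _ _ _);
    by rewrite mem_cat (mem_leaves_subtree sa) ?orbT.
rewrite /T /absorb; case: ltnP => [/IH //|acc'_ge].
have [_ near_b] := IH [::] K_gt0.
split=> [i j ia ja|s i j sb si sj]; last exact/near_graft/near_b.
by apply: near_graft_acc; rewrite // size_cat; lia.
Qed.

Lemma close_pairs_coarsen t acc :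
  is_binary t -> (size acc < K)%N -> close_pairs (coarsen t acc) acc t.
Proof.
elim/binary_ind: t acc => [x|l r IHl IHr|ts /is_binary_other -> //] acc.
  by move=> _ acc_lt; rewrite coarsen_leaf; apply: (close_pairs_flat (t := Leaf x)) => /=; lia.
rewrite is_binary_node2 => /andP[l_bin r_bin] acc_lt.
have [t_light|t_heavy] := boolP (light (Node [:: l; r])).
  by rewrite coarsen_light //; apply: close_pairs_flat; lia.
suff [near_acc near_children] :
    (forall i j, i \in acc -> j \in acc -> near (coarsen (Node [:: l; r]) acc) i j K.*2) /\
    (forall s i j, subtree s l \/ subtree s r -> i \in leaves s -> j \in leaves s ->
       near (coarsen (Node [:: l; r]) acc) i j (size (leaves s) + K.*2)).
  split=> // s i j /subtree_node2[->|sl|sr]; last 2 first.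
  - exact: near_children (or_introl sl).
  - exact: near_children (or_intror sr).
  move=> it jt; have t_perm := perm_leaves_coarsen (Node [:: l; r]) acc.
  have mem_T x : x \in leaves (Node [:: l; r]) -> x \in leaves (coarsen (Node [:: l; r]) acc).
    by move=> xt; rewrite (perm_mem t_perm) mem_cat xt orbT.
  apply: near_leaves (mem_T _ it) (mem_T _ jt) _.
  by rewrite (perm_size t_perm) size_cat addnC leq_add2l -addnn ltnW ?ltn_addr.
rewrite coarsen_node2 //.
case: ifP => l_light; first exact: close_pairs_absorb (fun acc => IHr acc r_bin).
case: ifP => r_light.
  have [near_acc near_children] := close_pairs_absorb r_light acc_lt (fun acc => IHl acc l_bin).
  by split=> // s i j /or_comm; apply: near_children.
split=> [i j ia ja|s i j s_lr si sj]; first by apply: near_graft_acc => //; lia.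
apply: near_graft.
have [_ near_l] := IHl [::] l_bin K_gt0.
have [_ near_r] := IHr [::] r_bin K_gt0.
case: s_lr => [sl|sr].
  by apply: near_subtree (near_l _ _ _ sl si sj); apply: subtree_child; left.
by apply: near_subtree (near_r _ _ _ sr si sj); apply: subtree_child; right; left.
Qed.

Lemma lca_size_coarsen t i j : is_hc_tree t -> is_binary t ->
  (lca_size i j (coarsen t [::]) <= lca_size i j t + K.*2)%N.
Proof.
move=> /andP[t_perm _] t_bin.
have mem_t x : x \in leaves t by rewrite (perm_mem t_perm) mem_enum.
have [s st [si sj ->]] := lca_size_witness (mem_t i) (mem_t j).
have [_ near_s] := close_pairs_coarsen (acc := [::]) t_bin K_gt0.
apply: lca_size_le_near (near_s s i j st si sj).
by rewrite (perm_uniq (perm_leaves_coarsen _ _)) (perm_uniq t_perm) enum_uniq.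
Qed.

Lemma coarsen_spec t : is_hc_tree t -> is_binary t -> (2 <= n)%N -> (K <= n)%N ->
  let T := coarsen t [::] in
  [/\ is_hc_tree T, all_nodes (fun ts => size ts <= K.*2)%N T,
      (n <= K.*2 * num_internal T)%N, (K * num_internal T <= 6 * n)%N
    & forall i j, (lca_size i j T <= lca_size i j t + K.*2)%N].
Proof.
move=> t_hc t_bin n_ge2 K_le_n T; have /andP[t_perm _] := t_hc.
have size_t : size (leaves t) = n by rewrite (perm_size t_perm) size_enum_ord.
have T_small : all_nodes (fun ts => size ts <= K.*2)%N T.
  by apply: (sub_all_nodes _ (small_node_coarsen (acc := [::]) t_bin K_gt0)) => ts /andP[].
split=> //; first exact: coarsen_hc.
- have := size_leaves_le_num_internal T_small.
  by rewrite (perm_size (perm_leaves_coarsen t [::])) size_t; lia.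
- by move: (num_internal_coarsen_le (t := t)); rewrite size_t; apply.
- by move=> i j; apply: lca_size_coarsen.
Qed.

End Coarsening.

(** * Bipartition trees *)

Section Bipartitions.
Variable n : nat.
Notation V := 'I_n.
Implicit Types (p : pred V) (i j x : V).

Definition bipartition p : tree V :=
  Node [:: flat (filter p (enum V)); flat (filter (predC p) (enum V))].

Lemma perm_leaves_bipartition p : perm_eq (leaves (bipartition p)) (enum V).
Proof. by rewrite leaves_node2 !leaves_flat perm_filterC. Qed.

Lemma bipartition_hc p : (0 < count p (enum V))%N -> (0 < count (predC p) (enum V))%N ->
  is_hc_tree (bipartition p).
Proof.
move=> p_pos pC_pos; rewrite /is_hc_tree perm_leaves_bipartition all_nodes_node2.
by rewrite !all_nodes_flat /= !size_map !size_filter -!lt0n p_pos pC_pos.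
Qed.

Lemma lca_size_bipartition p i j : p i = p j ->
  (count (fun x => p x != p i) (enum V) <= n - lca_size i j (bipartition p))%N.
Proof.
move=> pij; set side := fun x => p x == p i.
have cnt : (count side (enum V) + count (fun x => p x != p i) (enum V) = n)%N.
  by rewrite count_predC size_enum_ord.
suff : (lca_size i j (bipartition p) <= count side (enum V))%N by lia.
have [c c_sub c_side] :
    exists2 c, subtree c (bipartition p) & leaves c = filter side (enum V).
  have [pi|pi] := boolP (p i).
    exists (flat (filter p (enum V))); first by apply: subtree_child; left.
    by rewrite leaves_flat; apply: eq_filter => x; rewrite /side pi; case: (p x).
  exists (flat (filter (predC p) (enum V))); first by apply: subtree_child; right; left.
  by rewrite leaves_flat; apply: eq_filter => x; rewrite /side /= (negbTE pi); case: (p x).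
have T_uniq : uniq (leaves (bipartition p)).
  by rewrite (perm_uniq (perm_leaves_bipartition p)) enum_uniq.
have [ic jc] : i \in leaves c /\ j \in leaves c.
  by split; rewrite c_side mem_filter mem_enum /side ?pij eqxx.
by rewrite -size_filter -c_side (lca_size_le_subtree T_uniq c_sub).
Qed.

End Bipartitions.

Section Quarters.
Variables n q : nat.
Hypotheses (q_gt0 : (0 < q)%N) (q_le : (4 * q <= n)%N).
Notation V := 'I_n.
Implicit Types (i j x : V).

Definition quarter x := minn (x %/ q) 3.

Lemma quarter_le3 x : (quarter x <= 3)%N.
Proof. exact: geq_minr. Qed.

Lemma quarter_count a : (a <= 3)%N -> (q <= count (fun x => quarter x == a) (enum V))%N.
Proof.
move=> a3; have -> : count (fun x => quarter x == a) (enum V) =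
    count (fun m => minn (m %/ q) 3 == a) (iota 0 n) by rewrite -val_enum_ord count_map.
have -> : n = (a * q + (q + (n - a * q - q)))%N by nia.
rewrite !iotaD !count_cat add0n.
suff -> : count (fun m => minn (m %/ q) 3 == a) (iota (a * q) q) = q by lia.
apply/eqP; rewrite -[q in _ == q](size_iota (a * q)) -all_count; apply/allP => m.
rewrite mem_iota => /andP[m_ge m_lt]; rewrite -(subnKC m_ge) divnMDl // divn_small; last by lia.
by rewrite addn0; apply/eqP; lia.
Qed.

Lemma quarter_count2 a b : (a <= 3)%N -> (b <= 3)%N -> a != b ->
  (q.*2 <= count (fun x => (quarter x == a) || (quarter x == b)) (enum V))%N.
Proof.
move=> a3 b3 ab.
have disj : count (predI (fun x => quarter x == a) (fun x => quarter x == b)) (enum V) = 0%N.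
  apply/eqP; rewrite -leqn0 leqNgt -has_count; apply/hasPn => x _ /=.
  by apply/andP => -[/eqP -> /eqP ba]; rewrite ba eqxx in ab.
have := count_predUI (fun x => quarter x == a) (fun x => quarter x == b) (enum V).
rewrite disj addn0 => /= ->.
by rewrite -addnn leq_add ?quarter_count.
Qed.

(* The [k]-th way of pairing up the four quarters puts quarter 0 with quarter
   [k.+1]; any two quarters are on the same side of one of the three. *)
Definition quarter_split (k : 'I_3) (a : nat) := (a == 0) || (a == k.+1).

Lemma quarter_split_agree a b : (a <= 3)%N -> (b <= 3)%N ->
  exists k, quarter_split k a = quarter_split k b.
Proof.
case: a => [|[|[|[|//]]]] _; case: b => [|[|[|[|//]]]] _;
  by [exists ord0 | exists (inord 1); rewrite /quarter_split inordK
                  | exists (inord 2); rewrite /quarter_split inordK].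
Qed.

Lemma quarter_split_sides k v : exists a b,
  [/\ (a <= 3)%N, (b <= 3)%N, a != b, quarter_split k a != v & quarter_split k b != v].
Proof.
case: k => [[|[|[|//]]] ?]; case: v;
  by [exists 0, 1 | exists 0, 2 | exists 0, 3 | exists 1, 2 | exists 1, 3 | exists 2, 3].
Qed.

Definition split_tree k := bipartition (fun x => quarter_split k (quarter x)).

Lemma count_quarter_split k v :
  (q.*2 <= count (fun x => quarter_split k (quarter x) != v) (enum V))%N.
Proof.
have [a [b [a3 b3 ab sa sb]]] := quarter_split_sides k v.
by apply: leq_trans (quarter_count2 a3 b3 ab) _; apply: sub_count => x /orP[] /eqP ->.
Qed.

Lemma split_tree_hc k : is_hc_tree (split_tree k).
Proof.
have q2_gt0 : (0 < q.*2)%N by rewrite double_gt0.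
apply: bipartition_hc.
  apply: leq_trans q2_gt0 (leq_trans (count_quarter_split k false) _).
  by apply: sub_count => x /=; case: quarter_split.
apply: leq_trans q2_gt0 (leq_trans (count_quarter_split k true) _).
by apply: sub_count => x /=; case: quarter_split.
Qed.

Lemma sum_lca_split_trees i j :
  (q.*2 <= \sum_(k < 3) (n - lca_size i j (split_tree k)))%N.
Proof.
have [k s_ij] := quarter_split_agree (quarter_le3 i) (quarter_le3 j).
rewrite (bigD1 k) //=; apply: leq_trans (leq_addr _ _).
exact: leq_trans (count_quarter_split k _) (lca_size_bipartition s_ij).
Qed.

End Quarters.

(** * Revenue *)

Local Open Scope ring_scope.

Section PairSums.
Variables (R : realFieldType) (n : nat) (w : 'I_n -> 'I_n -> R).
Hypothesis w_ge0 : forall i j, 0 <= w i j.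

Definition pair_sum (f : 'I_n -> 'I_n -> nat) : R :=
  \sum_(i < n) \sum_(j < n | (i < j)%N) w i j * (f i j)%:R.

Notation total_weight := (pair_sum (fun _ _ => 1%N)).

Lemma pair_sum_ge0 f : 0 <= pair_sum f.
Proof. by apply: sumr_ge0 => i _; apply: sumr_ge0 => j _; apply: mulr_ge0. Qed.

Lemma ler_pair_sum f g : (forall i j, (f i j <= g i j)%N) -> pair_sum f <= pair_sum g.
Proof.
by move=> fg; apply: ler_sum => i _; apply: ler_sum => j _; rewrite ler_wpM2l ?ler_nat.
Qed.

Lemma pair_sumD f g : pair_sum (fun i j => f i j + g i j)%N = pair_sum f + pair_sum g.
Proof.
rewrite -big_split; apply: eq_bigr => i _; rewrite -big_split; apply: eq_bigr => j _.
by rewrite natrD mulrDr.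
Qed.

Lemma pair_sum_const c : pair_sum (fun _ _ => c) = c%:R * total_weight.
Proof.
rewrite mulr_sumr; apply: eq_bigr => i _; rewrite mulr_sumr; apply: eq_bigr => j _.
by rewrite mulr1 mulrC.
Qed.

Lemma pair_sum_sum m (F : 'I_m -> 'I_n -> 'I_n -> nat) :
  pair_sum (fun i j => \sum_(k < m) F k i j)%N = \sum_(k < m) pair_sum (F k).
Proof.
rewrite [RHS]exchange_big; apply: eq_bigr => i _.
rewrite [RHS]exchange_big; apply: eq_bigr => j _.
by rewrite natr_sum mulr_sumr.
Qed.

Lemma hc_rev_ge0 t : 0 <= hc_rev w t.
Proof. exact: pair_sum_ge0. Qed.

Lemma hc_rev_lca_growth t t' c :
  (forall i j, (lca_size i j t' <= lca_size i j t + c)%N) ->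
  hc_rev w t - c%:R * total_weight <= hc_rev w t'.
Proof.
move=> lca_le; rewrite lerBlDr -pair_sum_const -pair_sumD.
by apply: ler_pair_sum => i j; have := lca_le i j; lia.
Qed.

Lemma hc_rev_opt_lower_bound t q : (0 < q)%N -> (4 * q <= n)%N ->
  (forall T, is_hc_tree T -> hc_rev w T <= hc_rev w t) ->
  (q.*2)%:R * total_weight <= 3 * hc_rev w t.
Proof.
move=> q_gt0 q_le t_opt.
apply: le_trans (_ : \sum_(k < 3) hc_rev w (split_tree n q k) <= _).
  rewrite -pair_sum_const -pair_sum_sum; apply: ler_pair_sum => i j.
  exact: sum_lca_split_trees.
apply: le_trans (ler_sum _ (fun k _ => t_opt _ (split_tree_hc q_gt0 q_le k))) _.
by rewrite sumr_const card_ord mulr_natl.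
Qed.

End PairSums.

Section Arithmetic.
Variable R : realFieldType.
Implicit Types (x eps X Y W : R).

Lemma exists_nat_floor x m : 1 <= x -> x <= m%:R ->
  exists K : nat, [/\ (0 < K <= m)%N, K%:R <= x & x < K.+1%:R].
Proof.
move=> x_ge1; elim: m => [|m IH] x_le; first by move: x_le; rewrite [0%:R]/=; lra.
have [m1_le|x_lt] := lerP m.+1%:R x.
  by exists m.+1; rewrite leqnn (le_lt_trans x_le) ?ltr_nat.
have [m_le|x_lt'] := lerP m%:R x.
  have : 1 < m.+1%:R :> R := le_lt_trans x_ge1 x_lt.
  by rewrite ltr1n ltnS => m_gt0; exists m; rewrite m_gt0 leqnSn.
by have [K [/andP[K_gt0 K_le] ? ?]] := IH (ltW x_lt'); exists K; rewrite K_gt0 leqW.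
Qed.

Lemma internal_count_bounds eps (n K N : nat) : 0 < eps ->
  K%:R <= eps * n%:R -> eps * n%:R < K.+1%:R -> (0 < K)%N ->
  (n <= K.*2 * N)%N -> (K * N <= 6 * n)%N -> 2^-1 / eps <= N%:R <= 12 / eps.
Proof.
move=> eps_gt0 K_le K_gt K_gt0; rewrite -!(ler_nat R) !natrM -mul2n natrM.
move=> n_le KN_le; rewrite ler_pdivrMr // ler_pdivlMr //.
have n_gt0 : 0 < n%:R :> R.
  by rewrite -(pmulr_rgt0 _ eps_gt0) (lt_le_trans _ K_le) ?ltr0n.
have N_ge0 : 0 <= N%:R :> R by [].
have KN_le_eN : K%:R * N%:R <= eps * n%:R * N%:R := ler_wpM2r N_ge0 K_le.
have eN_le_K1N : eps * n%:R * N%:R <= K.+1%:R * N%:R := ler_wpM2r N_ge0 (ltW K_gt).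
have N_le_KN : N%:R <= K%:R * N%:R :> R by rewrite ler_peMl // ler1n.
rewrite -natr1 in eN_le_K1N; apply/andP; split; rewrite -(ler_pM2l n_gt0); lra.
Qed.

Lemma node_size_bound eps (n K s : nat) : 0 <= eps * n%:R -> K%:R <= eps * n%:R ->
  (s <= K.*2)%N -> s%:R <= 3 * eps * n%:R.
Proof. by rewrite -(ler_nat R) -mul2n natrM; lra. Qed.

Lemma quarter_bounds eps (n : nat) : 1 <= eps * n%:R -> 19 * eps < 1 ->
  [/\ (0 < n %/ 4)%N, (4 * (n %/ 4) <= n)%N & (3 * n <= 19 * (n %/ 4))%N].
Proof.
move=> eps_n_ge1 eps_small.
have n_gt0 : 0 < n%:R :> R by case: n eps_n_ge1 => [|m]; rewrite ?mulr0 ?ler10 ?ltr0Sn.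
have eps_n_lt : 19 * eps * n%:R < n%:R by rewrite gtr_pMl.
have : 19%:R < n%:R :> R by lra.
by rewrite ltr_nat => n_gt19; split; lia.
Qed.

(* 2K W <= 2 eps n W <= (38 / 3) eps q W <= 19 eps X. *)
Lemma revenue_tradeoff eps X Y W (n K q : nat) : 0 < eps -> 0 <= W ->
  K%:R <= eps * n%:R -> (3 * n <= 19 * q)%N ->
  X - (K.*2)%:R * W <= Y -> (q.*2)%:R * W <= 3 * X -> (1 - 19 * eps) * X <= Y.
Proof.
move=> eps_gt0 W_ge0 K_le; rewrite -(ler_nat R) !natrM -!mul2n !natrM.
move=> nq loss lower.
have eW_ge0 : 0 <= eps * W by rewrite mulr_ge0 // ltW.
have := ler_wpM2r W_ge0 K_le; have := ler_wpM2r eW_ge0 nq.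
have := ler_wpM2l (ltW eps_gt0) lower; lra.
Qed.

End Arithmetic.

Theorem theorem1 :
  exists c1 c2 : rat, 0 < c1 /\ 0 < c2 /\
  forall (R : realFieldType) (n : nat) (w : 'I_n -> 'I_n -> R) (TO : tree 'I_n)
         (eps : R),
    (2 <= n)%N ->
    (forall i j, 0 <= w i j <= 1) ->
    is_hc_tree TO -> is_binary TO ->
    (forall T : tree 'I_n, is_hc_tree T -> hc_rev w T <= hc_rev w TO) ->
    0 < eps -> eps <= 1 -> 1 <= eps * n%:R ->
    exists Tt : tree 'I_n,
      [/\ is_hc_tree Tt,
          ratr c1 / eps <= (num_internal Tt)%:R <= ratr c2 / eps,
          all_nodes (fun ts => (size ts)%:R <= 3 * eps * n%:R) Tt
        & (1 - 19 * eps) * hc_rev w TO <= hc_rev w Tt].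
Proof.
exists 2^-1, 12; do 2!split=> //.
move=> R n w TO eps n_ge2 w01 TO_hc TO_bin TO_opt eps_gt0 eps_le1 eps_n_ge1.
have w_ge0 i j : 0 <= w i j by case/andP: (w01 i j).
have eps_n_ge0 : 0 <= eps * n%:R := le_trans ler01 eps_n_ge1.
have eps_n_le_n : eps * n%:R <= n%:R := ler_piMl (ler0n _ n) eps_le1.
have [K [/andP[K_gt0 K_le_n] K_le eps_n_lt]] := exists_nat_floor eps_n_ge1 eps_n_le_n.
have [T_hc T_small n_le KN_le lca_T] := coarsen_spec K_gt0 TO_hc TO_bin n_ge2 K_le_n.
exists (coarsen K TO [::]); split=> //.
- rewrite fmorphV !rmorph_nat.
  exact: (internal_count_bounds eps_gt0 K_le eps_n_lt K_gt0 n_le KN_le).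
- by apply: sub_all_nodes T_small => ts; apply: node_size_bound.
have loss := hc_rev_lca_growth w_ge0 lca_T.
have [eps_small|eps_big] := ltrP (19 * eps) 1; last first.
  by rewrite (le_trans _ (hc_rev_ge0 w_ge0 _)) // mulr_le0_ge0 ?hc_rev_ge0 ?subr_le0.
have [q_gt0 q_le q_ge] := quarter_bounds eps_n_ge1 eps_small.
exact: revenue_tradeoff eps_gt0 (pair_sum_ge0 w_ge0 _) K_le q_ge loss
  (hc_rev_opt_lower_bound w_ge0 q_gt0 q_le TO_opt).
Qed.
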